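(* Let $\mathbf{X}$ be a finitely supported real random variable with $\mathbf{E}[\mathbf{X}]=0$ and $\mathrm{Var}[\mathbf{X}]=1$. Let $q(x)$ be a multilinear polynomial over $\mathbb{R}^n$ of degree at most $d$ with $\mathrm{sparsity}(q)=T$. Then for $\mathbf{x}\sim\mathbf{X}^{\otimes n}$, the random variable $q(\mathbf{x})$ takes at least $\frac{1}{2d^2}\log(T)-3$ distinct output values.
   Context: A multilinear polynomial of degree at most $d$ is $q(x)=\sum_{|S|\le d}\widehat{q}(S)\prod_{i\in S}x_i$; $\mathrm{sparsity}(q)$ is its number of nonzero coefficients. $\log$ denotes the logarithm to base $2$. $\mathbf{X}^{\otimes n}$ is a vector of $n$ i.i.d. copies of $\mathbf{X}$. *)

From HB Require Import structures.
From mathcomp Require Import all_boot all_order all_algebra.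
From mathcomp Require Import all_classical all_reals all_analysis.
Set Implicit Arguments. Unset Strict Implicit. Unset Printing Implicit Defensive.
Import Order.TTheory GRing.Theory Num.Theory.
Local Open Scope ring_scope.

Definition mlpoly_eval (R : realType) (n : nat) (qhat : {ffun {set 'I_n} -> R})
  (x : 'I_n -> R) : R :=
  \sum_(S : {set 'I_n}) qhat S * \prod_(i in S) x i.

Definition mlpoly_deg_le (R : realType) (n : nat) (qhat : {ffun {set 'I_n} -> R})
  (d : nat) : Prop :=
  forall S : {set 'I_n}, (d < #|S|)%N -> qhat S = 0.

Definition sparsity (R : realType) (n : nat) (qhat : {ffun {set 'I_n} -> R}) : nat :=
  #|[set S : {set 'I_n} | qhat S != 0]|.

(* A finitely supported real random variable X: distinct atoms a : 'I_m -> R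
   with positive probabilities p : 'I_m -> R summing to 1. *)
Definition fin_distr (R : realType) (m : nat) (a : 'I_m -> R) (p : 'I_m -> R) : Prop :=
  injective a /\ (forall j, 0 < p j) /\ \sum_(j < m) p j = 1.

Definition fmean (R : realType) (m : nat) (a p : 'I_m -> R) : R :=
  \sum_(j < m) p j * a j.
Definition fvar (R : realType) (m : nat) (a p : 'I_m -> R) : R :=
  \sum_(j < m) p j * (a j - fmean a p) ^+ 2.

(* Number of distinct values taken (with positive probability) by q(x),
   x ~ X^{(x)n}: the support of X^{(x)n} is the set of vectors with entries
   among the atoms, i.e. (fun i => a (f i)) for f : {ffun 'I_n -> 'I_m}. *)
Definition num_values (R : realType) (n m : nat) (a : 'I_m -> R)
  (qhat : {ffun {set 'I_n} -> R}) : nat :=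
  size (undup [seq mlpoly_eval qhat (fun i => a (f i)) | f : {ffun 'I_n -> 'I_m}]).

Definition log2 (R : realType) (x : R) : R := ln x / ln 2.

From HB Require Import structures.
From mathcomp Require Import all_boot all_order all_algebra.
From mathcomp Require Import all_classical all_reals all_analysis.
From mathcomp Require Import zify ring lra.
From mathcomp Require Import fintype finset.
Set Implicit Arguments. Unset Strict Implicit. Unset Printing Implicit Defensive.
Import Order.TTheory GRing.Theory Num.Theory.
Local Open Scope ring_scope.

(* Since Var X = 1, X has two distinct atoms a0, a1; restrict q to the subcube {a0, a1}^n,
   i.e. to x = u + w s with s in {-1,1}^n and w <> 0.  The restriction G is a Boolean
   function of degree at most d taking V values.  Its Walsh coefficient at T is
   sum_(U >= T) qhat(U) w^|T| u^|U\T|, which is triangular in qhat, so every S with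
   qhat(S) <> 0 lies below some T of size at most d with G^(T) <> 0: sparsity(q) is at
   most 2^d times the number of nonzero Walsh coefficients of G.  For each value v, the
   indicator [G = v] = prod_(v' <> v) (G - v') / (v - v') has degree at most dV and integer
   values, hence Walsh coefficients in 2^(-dV) Z (granularity).  The indicators have total
   squared Walsh mass 1 by Parseval and G is a combination of them, so G has at most
   4^(dV) nonzero coefficients.  Hence log T <= d + 2dV, and V >= log T / (2d^2) - 3. *)

Lemma superset_ind (T : finType) (P : {set T} -> Prop) :
  (forall A : {set T}, (forall B : {set T}, A \proper B -> P B) -> P A) ->
  forall A, P A.
Proof.
move=> IH A; have [k] := ubnP (#|T| - #|A|); elim: k A => // k IHk A hA.
apply: IH => B /proper_card ltAB; apply: IHk.
have := subset_leq_card (subsetT B); rewrite cardsT; lia.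
Qed.

Lemma bigA_distr_subset (R : comNzRingType) (I : finType) (U : {set I})
    (F G : I -> R) :
  \sum_(S : {set I} | S \subset U) \prod_(i in S) F i * \prod_(i in U :\: S) G i
  = \prod_(i in U) (F i + G i).
Proof.
rewrite big_mkcond [RHS]big_mkcond /=.
transitivity (\prod_i ((if i \in U then F i else 0) + (if i \in U then G i else 1)));
  last by apply: eq_bigr => i _; case: (i \in U); rewrite ?add0r.
rewrite bigA_distr; apply: eq_bigr => S _.
have [sSU|/subsetPn[i iS iU]] := boolP (S \subset U); last first.
  by rewrite (bigD1 i) //= iS (negbTE iU) mul0r.
rewrite [RHS](bigID (mem S)) /=; congr (_ * _).
  by apply: eq_big => // i iS; rewrite iS (subsetP sSU).
rewrite [LHS]big_mkcond [RHS]big_mkcond /=; apply: eq_bigr => i _; rewrite !inE.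
by case: (i \in S); case: (i \in U).
Qed.

Definition setSD {T : finType} (A B : {set T}) : {set T} :=
  [set i | (i \in A) != (i \in B)].

Lemma setSD_eq0 {T : finType} (A B : {set T}) : (setSD A B == set0) = (A == B).
Proof.
apply/eqP/eqP => [AB|<-]; apply/setP => i; last by rewrite !inE eqxx.
by move/setP/(_ i): AB; rewrite !inE => /negbFE/eqP.
Qed.

Lemma card_setSD {T : finType} (A B : {set T}) : (#|setSD A B| <= #|A| + #|B|)%N.
Proof.
rewrite -cardsUI; apply: leq_trans (leq_addr _ _); apply: subset_leq_card.
by apply/subsetP => i; rewrite /setSD !inE; case: (i \in A); case: (i \in B).
Qed.

Section BooleanFourier.
Context {R : numFieldType} {n : nat}.
Implicit Types (S T U W : {set 'I_n}) (h : {set 'I_n} -> R).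

(* [S] encodes the point of {-1,1}^n that is -1 exactly on [S]; [chi T] is the Walsh
   character prod_(i in T) x_i. *)
Definition spin S i : R := if i \in S then -1 else 1.
Definition chi T S : R := \prod_(i in T) spin S i.

Lemma chiC T S : chi T S = chi S T.
Proof.
suff chiI A B : chi A B = \prod_(i in A :&: B) (-1 : R) by rewrite !chiI setIC.
by rewrite /chi /spin -big_mkcondr; apply: eq_bigl => i; rewrite inE.
Qed.

Lemma chi_mul T U S : chi T S * chi U S = chi (setSD T U) S.
Proof.
rewrite ![chi _ S]chiC /chi -big_split /=; apply: eq_bigr => i _.
rewrite /spin !inE.
by case: (i \in T); case: (i \in U); rewrite /= ?mulN1r ?opprK ?mulr1 ?mul1r.
Qed.

Lemma sum_chi W : \sum_S chi W S = (W == set0)%:R * 2 ^+ n.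
Proof.
under eq_bigr => S _ do rewrite chiC /chi big_mkcond.
rewrite -bigA_distr /=.
have [->|/set0Pn[i iW]] := eqVneq W set0.
  rewrite mul1r -[in RHS](card_ord n) -prodr_const.
  by apply: eq_bigr => i _; rewrite /spin inE.
by rewrite (bigD1 i) //= /spin iW addNr !mul0r.
Qed.

Lemma sum_chi_mul T U : \sum_S chi T S * chi U S = (T == U)%:R * 2 ^+ n.
Proof. by under eq_bigr => S _ do rewrite chi_mul; rewrite sum_chi setSD_eq0. Qed.

Definition fourier h T : R := (2 ^+ n)^-1 * \sum_S h S * chi T S.

Lemma pow2_neq0 : (2 ^+ n : R) != 0.
Proof. by rewrite expf_neq0 // pnatr_eq0. Qed.

Lemma sum_eqb_mul (F : {set 'I_n} -> R) W : \sum_T (T == W)%:R * F T = F W.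
Proof.
by rewrite (bigD1 W) //= eqxx mul1r big1 ?addr0 // => T /negbTE ->; rewrite mul0r.
Qed.

Lemma fourier_uniq h (c : {set 'I_n} -> R) :
  (forall S, h S = \sum_T c T * chi T S) -> forall W, fourier h W = c W.
Proof.
move=> hc W; rewrite /fourier.
under eq_bigr => S _ do rewrite hc mulr_suml.
rewrite exchange_big /=.
under eq_bigr => T _ do under eq_bigr => S _ do rewrite -mulrA.
under eq_bigr => T _ do rewrite -mulr_sumr sum_chi_mul mulrCA.
by rewrite sum_eqb_mul mulrC mulfK // pow2_neq0.
Qed.

Lemma fourier_expansion h S : h S = \sum_T fourier h T * chi T S.
Proof.
rewrite /fourier; under eq_bigr => T _ do rewrite -mulrA mulr_suml.
rewrite -mulr_sumr exchange_big /=.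
under eq_bigr => U _ do under eq_bigr => T _ do rewrite -mulrA (chiC T U) (chiC T S).
under eq_bigr => U _ do rewrite -mulr_sumr sum_chi_mul mulrCA.
by rewrite sum_eqb_mul mulrC mulfK // pow2_neq0.
Qed.

Lemma parseval h : \sum_T fourier h T ^+ 2 = (2 ^+ n)^-1 * \sum_S h S ^+ 2.
Proof.
under [X in _ * X]eq_bigr => S _ do rewrite expr2 {2}(fourier_expansion h S) mulr_sumr.
rewrite exchange_big mulr_sumr; apply: eq_bigr => T _.
rewrite expr2 {2}/fourier mulrCA mulr_sumr; congr (_ * _).
by apply: eq_bigr => S _; ring.
Qed.

Lemma fourierZ c h T : fourier (fun S => c * h S) T = c * fourier h T.
Proof.
rewrite /fourier mulrCA; congr (_ * _); rewrite mulr_sumr.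
by apply: eq_bigr => S _; rewrite mulrA.
Qed.

Lemma fourierB h1 h2 T :
  fourier (fun S => h1 S - h2 S) T = fourier h1 T - fourier h2 T.
Proof. by rewrite /fourier -mulrBr -sumrB; under eq_bigr do rewrite mulrBl. Qed.

Lemma fourier_sum (I : Type) (r : seq I) (F : I -> {set 'I_n} -> R) T :
  fourier (fun S => \sum_(i <- r) F i S) T = \sum_(i <- r) fourier (F i) T.
Proof.
rewrite /fourier; under eq_bigr do rewrite mulr_suml.
by rewrite exchange_big mulr_sumr.
Qed.

Lemma fourier_cst c T : fourier (fun => c) T = (T == set0)%:R * c.
Proof.
by rewrite /fourier -mulr_sumr sum_chi mulrC -mulrA mulfK ?pow2_neq0 // mulrC.
Qed.

Definition fourier_deg_le k h := forall T, (k < #|T|)%N -> fourier h T = 0.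

Lemma fourier_deg_leW k1 k2 h :
  (k1 <= k2)%N -> fourier_deg_le k1 h -> fourier_deg_le k2 h.
Proof. by move=> k12 hk T kT; apply: hk; apply: leq_ltn_trans kT. Qed.

Lemma fourier_deg_le_cst c : fourier_deg_le 0 (fun => c).
Proof.
move=> T T0; rewrite fourier_cst; suff /negbTE-> : T != set0 by rewrite mul0r.
by rewrite -card_gt0.
Qed.

Lemma fourier_deg_le_affine k h c e :
  fourier_deg_le k h -> fourier_deg_le k (fun S => c * (h S - e)).
Proof.
move=> hk T kT; rewrite fourierZ fourierB hk // fourier_deg_le_cst ?subrr ?mulr0 //.
exact: leq_ltn_trans kT.
Qed.

Lemma fourier_deg_le_expansion k h (c : {set 'I_n} -> R) :
  (forall T, (k < #|T|)%N -> c T = 0) ->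
  (forall S, h S = \sum_T c T * chi T S) -> fourier_deg_le k h.
Proof. by move=> ck hc T kT; rewrite (fourier_uniq hc) ck. Qed.

Lemma fourier_deg_le_mul k1 k2 h1 h2 :
  fourier_deg_le k1 h1 -> fourier_deg_le k2 h2 ->
  fourier_deg_le (k1 + k2) (fun S => h1 S * h2 S).
Proof.
move=> hk1 hk2.
pose c W := \sum_T \sum_U (W == setSD T U)%:R * (fourier h1 T * fourier h2 U).
apply: (fourier_deg_le_expansion (c := c)) => [W kW | S].
  apply: big1 => T _; apply: big1 => U _.
  have [WTU|_] := eqVneq W (setSD T U); last by rewrite mul0r.
  have [T_le|T_gt] := leqP #|T| k1; last by rewrite hk1 // mul0r mulr0.
  have [U_le|U_gt] := leqP #|U| k2; last by rewrite hk2 // !mulr0.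
  have := card_setSD T U; rewrite -WTU => W_le.
  by have := leq_ltn_trans (leq_trans W_le (leq_add T_le U_le)) kW; rewrite ltnn.
rewrite (fourier_expansion h1 S) (fourier_expansion h2 S) mulr_suml.
under eq_bigr do rewrite mulr_sumr.
under [RHS]eq_bigr do rewrite mulr_suml.
rewrite [RHS]exchange_big; apply: eq_bigr => T _.
under [RHS]eq_bigr do rewrite mulr_suml.
rewrite [RHS]exchange_big; apply: eq_bigr => U _.
under [RHS]eq_bigr do rewrite -mulrA.
by rewrite sum_eqb_mul -chi_mul; ring.
Qed.

Lemma fourier_deg_le_prod (I : Type) (r : seq I) k (F : I -> {set 'I_n} -> R) :
  (forall i, fourier_deg_le k (F i)) ->
  fourier_deg_le (k * size r) (fun S => \prod_(i <- r) F i S).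
Proof.
move=> Fk; elim: r => [|i r IHr].
  rewrite muln0 (_ : (fun S => _) = fun => 1); first exact: fourier_deg_le_cst.
  by apply: funext => S; rewrite big_nil.
rewrite /= mulnS (_ : (fun S => _) = fun S => F i S * \prod_(j <- r) F j S).
  exact: fourier_deg_le_mul.
by apply: funext => S; rewrite big_cons.
Qed.

Lemma sum_subset_sign_chi U W :
  \sum_(S : {set 'I_n} | S \subset U) (-1) ^+ #|S| * chi W S =
  (U \subset W)%:R * 2 ^+ #|U|.
Proof.
transitivity (\sum_(S : {set 'I_n} | S \subset U)
               \prod_(i in S) - spin W i * \prod_(i in U :\: S) 1).
  by apply: eq_bigr => S _; rewrite big1_eq mulr1 prodrN chiC.
rewrite bigA_distr_subset; have [UW|/subsetPn[i iU iW]] := boolP (U \subset W).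
  rewrite mul1r -prodr_const; apply: eq_bigr => i iU.
  by rewrite /spin (subsetP UW) ?opprK.
by rewrite mul0r (bigD1 i) //= /spin (negbTE iW) addNr mul0r.
Qed.

Lemma sum_subset_sign U h :
  \sum_(S : {set 'I_n} | S \subset U) (-1) ^+ #|S| * h S =
  2 ^+ #|U| * \sum_(W : {set 'I_n} | U \subset W) fourier h W.
Proof.
under eq_bigr => S _ do rewrite (fourier_expansion h S) mulr_sumr.
rewrite exchange_big /= [RHS]mulr_sumr [RHS]big_mkcond; apply: eq_bigr => W _.
under eq_bigr do rewrite mulrCA.
rewrite -mulr_sumr sum_subset_sign_chi.
by case: (U \subset W); rewrite ?mul1r ?mul0r ?mulr0 // mulrC.
Qed.

Lemma fourier_deg_le_indicator d h (vals : seq R) v :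
  fourier_deg_le d h -> (forall S, h S \in vals) ->
  fourier_deg_le (d * size vals) (fun S => (h S == v)%:R).
Proof.
move=> hd hvals; set others := [seq v' <- vals | v' != v].
have -> : (fun S => (h S == v)%:R) =
          fun S => \prod_(v' <- others) ((v - v')^-1 * (h S - v')).
  apply: funext => S; have [->|hSv] := eqVneq (h S) v.
    rewrite big1_seq // => v' /andP[_]; rewrite mem_filter => /andP[v'v _].
    by rewrite mulVf // subr_eq0 eq_sym.
  rewrite (big_rem (h S)) /= ?subrr ?mulr0 ?mul0r //.
  by rewrite /others mem_filter hSv hvals.
apply: fourier_deg_leW (fourier_deg_le_prod (fun v' => fourier_deg_le_affine _ _ hd)).
by rewrite leq_mul2l size_filter count_size orbT.
Qed.

End BooleanFourier.

Section Granularity.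
Context {R : archiRealFieldType} {n : nat}.
Implicit Types (S T W : {set 'I_n}) (h : {set 'I_n} -> R).

Lemma fourier_granular k h :
  (forall S, h S \is a Num.int) -> fourier_deg_le k h ->
  forall T, 2 ^+ k * fourier h T \is a Num.int.
Proof.
move=> hZ hk; elim/superset_ind => T IH.
have [kT|Tk] := ltnP k #|T|; first by rewrite hk // mulr0 rpred0.
have : 2 ^+ k * \sum_(W : {set 'I_n} | T \subset W) fourier h W \is a Num.int.
  rewrite -(subnK Tk) exprD -mulrA -sum_subset_sign rpredM ?rpredX ?natr_int //.
  by apply: rpred_sum => S _; rewrite rpredM ?rpredX ?rpredN ?rpred1.
rewrite (bigD1 T) //= mulrDr rpredDr // mulr_sumr.
apply: rpred_sum => W /andP[TW WT]; apply: IH.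
by rewrite properEneq eq_sym WT.
Qed.

Lemma fourier_sqr_ge1 k h T :
  (forall S, h S \is a Num.int) -> fourier_deg_le k h -> fourier h T != 0 ->
  1 <= 4 ^+ k * fourier h T ^+ 2.
Proof.
move=> hZ hk hT.
have := sqr_intr_ge1 (fourier_granular hZ hk T) (mulf_neq0 pow2_neq0 hT).
by rewrite exprMn -exprM mulnC exprM [2 ^+ 2]expr2 -natrM.
Qed.

Lemma fourier_support_le d h (vals : seq R) :
  fourier_deg_le d h -> uniq vals -> (forall S, h S \in vals) ->
  (#|[set T | fourier h T != 0%R]| <= 4 ^ (d * size vals))%N.
Proof.
move=> hd uvals hvals; set D := (d * size vals)%N.
pose ind v S : R := (h S == v)%:R.
have ind_sqr_ge1 v T :
    fourier (ind v) T != 0 -> 1 <= 4 ^+ D * fourier (ind v) T ^+ 2.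
  by apply: fourier_sqr_ge1 (fourier_deg_le_indicator v hd hvals) => S; exact: natr_int.
have ind_total : \sum_(v <- vals) \sum_T fourier (ind v) T ^+ 2 = 1.
  under eq_bigr do rewrite parseval.
  rewrite -mulr_sumr exchange_big /= (eq_bigr (fun => 1)) => [|S _].
    rewrite sumr_const -cardsT -powersetT card_powerset cardsT card_ord natrX.
    by rewrite mulVf ?pow2_neq0.
  rewrite (bigD1_seq (h S)) //= /ind eqxx expr1n big1 ?addr0 // => v /negbTE.
  by rewrite eq_sym => ->; rewrite expr0n.
have cover T :
    fourier h T != 0 -> 1 <= \sum_(v <- vals) 4 ^+ D * fourier (ind v) T ^+ 2.
  have -> : h = fun S => \sum_(v <- vals) v * ind v S.
    apply: funext => S.
    rewrite (bigD1_seq (h S)) //= /ind eqxx mulr1 big1 ?addr0 // => v.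
    by rewrite eq_sym => /negbTE ->; rewrite mulr0.
  rewrite fourier_sum => hT.
  have /hasP[v vin nzv] : has (fun v => fourier (ind v) T != 0) vals.
    apply: contraNT hT => /hasPn nz0; rewrite big1_seq // => v /andP[_ /nz0].
    by rewrite fourierZ => /negbNE/eqP ->; rewrite mulr0.
  apply: le_trans (ind_sqr_ge1 _ _ nzv) _; rewrite (bigD1_seq v) //= lerDl.
  by apply: sumr_ge0 => v' _; rewrite mulr_ge0 ?sqr_ge0 ?exprn_ge0.
rewrite -(ler_nat R) natrX -sumr_const big_mkcond /=.
apply: le_trans (_ : _ <= \sum_T \sum_(v <- vals) 4 ^+ D * fourier (ind v) T ^+ 2) _.
  apply: ler_sum => T _; rewrite inE; case: ifP => [/cover //|_].
  by apply: sumr_ge0 => v _; rewrite mulr_ge0 ?sqr_ge0 ?exprn_ge0.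
rewrite exchange_big /=; under eq_bigr do rewrite -mulr_sumr.
by rewrite -mulr_sumr ind_total mulr1.
Qed.

End Granularity.

Section Subcube.
Context {R : realType} {n : nat}.
Variables (qhat : {ffun {set 'I_n} -> R}) (u w : R).
Implicit Types (S T U : {set 'I_n}).

(* The coefficients obtained by expanding every monomial of q at x_i = u + w s_i. *)
Definition subcube_coef T : R :=
  \sum_(U : {set 'I_n} | T \subset U) qhat U * (w ^+ #|T| * u ^+ #|U :\: T|).

Lemma mlpoly_eval_subcube S :
  mlpoly_eval qhat (fun i => u + w * spin S i) = \sum_T subcube_coef T * chi T S.
Proof.
rewrite /mlpoly_eval /subcube_coef.
under eq_bigr => U _ do
  rewrite (eq_bigr _ (fun i _ => addrC _ _)) -bigA_distr_subset mulr_sumr.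
rewrite (exchange_big_dep xpredT) //=; apply: eq_bigr => T _; rewrite mulr_suml.
apply: eq_bigr => U _; rewrite big_split prodr_const /= -/(chi T S) prodr_const; ring.
Qed.

Lemma subcube_coef_deg_le d : mlpoly_deg_le qhat d ->
  forall T, (d < #|T|)%N -> subcube_coef T = 0.
Proof.
move=> qd T dT; apply: big1 => U TU; rewrite qd ?mul0r //.
exact: leq_trans dT (subset_leq_card TU).
Qed.

Lemma subcube_coef_eq0 S : w != 0 ->
  (forall T, S \subset T -> subcube_coef T = 0) -> qhat S = 0.
Proof.
move=> w0; elim/superset_ind: S => S IH coef0.
have := coef0 S (subxx _); rewrite /subcube_coef (bigD1 S) //= setDv cards0 mulr1.
rewrite big1 ?addr0 => [/eqP|U /andP[SU US]].
  by rewrite mulf_eq0 expf_eq0 (negbTE w0) andbF orbF => /eqP.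
rewrite IH ?mul0r ?properEneq 1?eq_sym ?US // => T UT.
by apply: coef0; exact: subset_trans SU UT.
Qed.

Lemma sparsity_le_subcube d : w != 0 -> mlpoly_deg_le qhat d ->
  (sparsity qhat <= 2 ^ d * #|[set T | subcube_coef T != 0%R]|)%N.
Proof.
move=> w0 qd; set nz := [set T | subcube_coef T != 0].
have cover : [set S | qhat S != 0] \subset \bigcup_(T in nz) powerset T.
  apply/subsetP => S; rewrite inE => qS; apply/bigcupP.
  have /existsP[T /andP[ST cT]] :
      [exists T : {set 'I_n}, (S \subset T) && (subcube_coef T != 0)].
    apply: contraNT qS => /existsPn nz0; apply/eqP; apply: subcube_coef_eq0 w0 _ => T ST.
    by apply/eqP; move: (nz0 T); rewrite ST negbK.
  by exists T; rewrite ?inE ?powersetE.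
apply: leq_trans (subset_leq_card cover) _.
apply: leq_trans (unstable.card_big_setU _ _ _) _.
rewrite mulnC -sum_nat_const; apply: leq_sum => T; rewrite inE card_powerset => cT.
rewrite leq_pexp2l // leqNgt; apply: contra cT => dT.
by rewrite (subcube_coef_deg_le qd).
Qed.

Lemma sparsity_le_values d (vals : seq R) :
  w != 0 -> mlpoly_deg_le qhat d -> uniq vals ->
  (forall S, mlpoly_eval qhat (fun i => u + w * spin S i) \in vals) ->
  (sparsity qhat <= 2 ^ (d + 2 * (d * size vals)))%N.
Proof.
move=> w0 qd uvals hvals.
pose G S := mlpoly_eval qhat (fun i => u + w * spin S i).
have G_deg : fourier_deg_le d G :=
  fourier_deg_le_expansion (subcube_coef_deg_le qd) mlpoly_eval_subcube.
apply: leq_trans (sparsity_le_subcube w0 qd) _; rewrite expnD leq_mul2l expnM.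
have -> : [set T | subcube_coef T != 0] = [set T | fourier G T != 0].
  by apply/setP => T; rewrite !inE (fourier_uniq mlpoly_eval_subcube).
by rewrite fourier_support_le ?orbT.
Qed.

End Subcube.

Lemma fvar_const (R : realType) m (a p : 'I_m -> R) :
  \sum_j p j = 1 -> (forall j0 j1, a j0 = a j1) -> fvar a p = 0.
Proof.
move=> psum aconst; apply: big1 => j _.
suff -> : fmean a p = a j by rewrite subrr expr0n mulr0.
by rewrite /fmean (eq_bigr _ (fun i _ => congr1 _ (aconst i j))) -mulr_suml psum mul1r.
Qed.

Lemma log2_le_nat (R : realType) (N K : nat) :
  (N <= 2 ^ K)%N -> log2 (N%:R : R) <= K%:R.
Proof.
move=> NK; have ln2 : 0 < ln (2 : R) by rewrite ln_gt0 // ltr1n.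
rewrite /log2 ler_pdivrMr // mulr_natl -lnXn ?ltr0n //.
have [->|N0] := posnP N; first by rewrite ln0 // ln_ge0 // exprn_ege1 // ler1n.
by rewrite ler_ln ?posrE ?exprn_gt0 ?ltr0n // -natrX ler_nat.
Qed.

Lemma sub3_div_2sqr_le (R : realFieldType) (d V : nat) (x : R) :
  x <= (d + 2 * (d * V))%:R -> (2 * d%:R ^+ 2)^-1 * x - 3 <= V%:R.
Proof.
have V0 : 0 <= V%:R :> R by [].
have [->|d0] := posnP d; first by rewrite expr0n mulr0 invr0 mul0r; lra.
have d1 : 1 <= d%:R :> R by rewrite ler1n.
have d_sqr : d%:R <= d%:R ^+ 2 :> R by rewrite expr2 ler_peMl //; lra.
have dV_sqr : d%:R * V%:R <= d%:R ^+ 2 * V%:R :> R by rewrite ler_wpM2r.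
rewrite natrD !natrM => xle; rewrite lerBlDr mulrC ler_pdivrMr; lra.
Qed.

Theorem lemma6p2 (R : realType) (m : nat) (a p : 'I_m -> R)
  (n d : nat) (qhat : {ffun {set 'I_n} -> R}) :
  fin_distr a p -> fmean a p = 0 -> fvar a p = 1 ->
  mlpoly_deg_le qhat d ->
  (num_values a qhat)%:R >=
    (2 * (d%:R) ^+ 2)^-1 * log2 ((sparsity qhat)%:R : R) - 3.
Proof.
move=> [_ [_ psum]] _ var1 qd.
have [j0 [j1 a01]] : exists j0 j1, a j0 != a j1.
  case: (pselect (forall j0 j1, a j0 = a j1)) => [/(fvar_const psum)|].
    by rewrite var1 => /eqP; rewrite oner_eq0.
  by move/existsNP => [j0 /existsNP[j1 /eqP a01]]; exists j0, j1.
pose u := (a j0 + a j1) / 2; pose w := (a j1 - a j0) / 2.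
have w0 : w != 0 by rewrite mulf_neq0 ?invr_eq0 ?pnatr_eq0 // subr_eq0 eq_sym.
have subcube_values S : mlpoly_eval qhat (fun i => u + w * spin S i) \in
    undup [seq mlpoly_eval qhat (fun i => a (f i)) | f : {ffun 'I_n -> 'I_m}].
  rewrite mem_undup; apply/mapP; exists [ffun i => if i \in S then j0 else j1].
    by rewrite mem_enum.
  congr mlpoly_eval; apply: funext => i.
  by rewrite ffunE /spin; case: (i \in S); rewrite /u /w; field.
move/(log2_le_nat R): (sparsity_le_values w0 qd (undup_uniq _) subcube_values).
exact: sub3_div_2sqr_le.
Qed.
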